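(* Let $k_1<k_2<\cdots<k_n$ be positive integers and let $s_1$ be any positive integer. Then there exist a $\delta$-set $\Sigma=\{s_1<s_2<\cdots<s_l\}$ (whose minimum is the prescribed $s_1$) and indices $1\le j_1<j_2<\cdots<j_n<l-1$ such that $s_{j_i+1}-s_{j_i}=k_i$ for every $i=1,\ldots,n$.
   Context: All graphs are finite and simple; $d(u,v)$ denotes the usual graph distance. For a set $J$ of nonnegative integers, a distance $J$-labeling of $G$ is a function $f:V(G)\to J$ with $f(V(G))=J$ such that whenever two distinct vertices $u,v$ satisfy $f(u)=f(v)=k$, we have $d(u,v)=k$. It is proper if every $k\in J\setminus\{0\}$ is the label of at least two vertices. A finite set $\Sigma$ of nonnegative integers is a $\delta$-set if there exists a graph admitting a proper distance $\Sigma$-labeling. *)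

From mathcomp Require Import all_boot.
Set Implicit Arguments. Unset Strict Implicit. Unset Printing Implicit Defensive.

Definition simple_graph (T : finType) (e : rel T) : Prop :=
  symmetric e /\ irreflexive e.

Definition walk_of_len (T : finType) (e : rel T) (u v : T) (k : nat) : Prop :=
  exists p : seq T, [/\ size p = k, path e u p & last u p = v].

(* d(u,v) = k : the usual graph distance (length of a shortest u-v walk) equals k.
   If u and v are in different components, d(u,v) is infinite and equals no k. *)
Definition gdist_eq (T : finType) (e : rel T) (u v : T) (k : nat) : Prop :=
  walk_of_len e u v k /\ forall m, m < k -> ~ walk_of_len e u v m.

Definition distance_labeling (T : finType) (e : rel T) (J : seq nat) (f : T -> nat) : Prop :=
  [/\ (forall x, f x \in J),
      (forall k, k \in J -> exists x, f x = k) &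
      (forall u v, u != v -> f u = f v -> gdist_eq e u v (f u))].

Definition proper_distance_labeling (T : finType) (e : rel T) (J : seq nat) (f : T -> nat) : Prop :=
  distance_labeling e J f /\
  (forall k, k \in J -> k != 0 -> exists u v, [/\ u != v, f u = k & f v = k]).

Definition delta_set (S : seq nat) : Prop :=
  exists (T : finType) (e : rel T) (f : T -> nat),
    simple_graph e /\ proper_distance_labeling e S f.

(* Every interval [m+1, 3m+1] is a delta-set: on the path with vertices 0, ..., 4m+1, the
   labeling below uses each label L exactly twice, at distance L (at L and 2L when L <= 2m,
   at L-2m-1 and 2L-2m-1 when L > 2m).  In a disjoint union of graphs, vertices with equal
   labels from disjoint label sets lie in the same component, so the concatenation of two
   disjoint delta-sets is a delta-set.  Chaining the intervals that start at m_0 + 1 = s_1 and at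
   m_(i+1) + 1 with m_(i+1) = 3 m_i + k_(i+1) makes the gap between the end of the i-th
   interval and the start of the next one exactly k_(i+1). *)
From mathcomp Require Import all_boot zify.

Set Implicit Arguments. Unset Strict Implicit. Unset Printing Implicit Defensive.

Definition path_graph (n : nat) : rel 'I_n := fun x y => (x.+1 == y) || (y.+1 == x).
Arguments path_graph : clear implicits.

Lemma path_graph_simple n : simple_graph (path_graph n).
Proof.
split; first by move=> x y; rewrite /path_graph orbC.
by move=> x; apply/negP => /orP[] /eqP; lia.
Qed.

Lemma path_graph_last_dist n (u : 'I_n) p : path (path_graph n) u p ->
  last u p - u + (u - last u p) <= size p.
Proof.
elim: p u => [|x p IHp] u /=; first lia.
by case/andP => /orP[] /eqP ux /IHp; lia.
Qed.

Lemma path_graph_walk n (u v : 'I_n) : walk_of_len (path_graph n) u v (u - v + (v - u)).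
Proof.
move: {-1}(u - v + (v - u)) (erefl (u - v + (v - u))) => d.
elim: d u => [|d IHd] u duv.
  have -> : u = v by apply: ord_inj; lia.
  by exists [::]; split.
have [ltuv|ltvu|eq_uv] := ltngtP u v; last lia.
- pose w : 'I_n := Ordinal (leq_ltn_trans ltuv (ltn_ord v)).
  have [p [sz pth lst]] : walk_of_len (path_graph n) w v d by apply: IHd => /=; lia.
  by exists (w :: p); rewrite /= sz /path_graph eqxx pth.
- pose w : 'I_n := Ordinal (leq_ltn_trans (leq_pred u) (ltn_ord u)).
  have [p [sz pth lst]] : walk_of_len (path_graph n) w v d by apply: IHd => /=; lia.
  exists (w :: p); rewrite /= sz pth andbT; split => //.
  by apply/orP; right; apply/eqP => /=; lia.
Qed.

Lemma path_graph_gdist n (u v : 'I_n) : gdist_eq (path_graph n) u v (u - v + (v - u)).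
Proof.
split; first exact: path_graph_walk.
move=> k ltk [p [sz pth lst]].
by have := path_graph_last_dist pth; rewrite lst sz; lia.
Qed.

Definition interval_label (m t : nat) : nat :=
  if t <= m then t + m.*2.+1
  else if t <= m.*2 then t
  else if odd t then (t + m.*2.+1)./2 else t./2.

Lemma interval_labelP m t :
  [\/ t <= m /\ interval_label m t = t + m.*2.+1,
      m < t <= m.*2 /\ interval_label m t = t,
      m.*2 < t /\ t = (interval_label m t).*2
    | m.*2 < t /\ t + m.*2.+1 = (interval_label m t).*2].
Proof.
rewrite /interval_label; case: leqP => tm; first by constructor 1.
case: leqP => t2m; first by constructor 2.
by case: ifP => odd_t; [constructor 4 | constructor 3]; split => //; lia.
Qed.

Lemma interval_label_range m t : t <= (4 * m).+1 ->
  m < interval_label m t <= (3 * m).+1.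
Proof. by case: (interval_labelP m t) => -[]; lia. Qed.

Lemma interval_label_dist m t u : t <= (4 * m).+1 -> u <= (4 * m).+1 -> t != u ->
  interval_label m t = interval_label m u -> t - u + (u - t) = interval_label m t.
Proof.
move=> t_le u_le /eqP neq_tu.
by case: (interval_labelP m t) => -[]; case: (interval_labelP m u) => -[]; lia.
Qed.

Lemma interval_label_twice m L : m < L <= (3 * m).+1 ->
  exists t u, [/\ t != u, t <= (4 * m).+1, u <= (4 * m).+1,
                  interval_label m t = L & interval_label m u = L].
Proof.
move=> L_range; have [L_le|L_gt] := leqP L m.*2.
  exists L, L.*2; split; try lia.
    by case: (interval_labelP m L) => -[]; lia.
  by case: (interval_labelP m L.*2) => -[]; lia.
exists (L - m.*2.+1), (L.*2 - m.*2.+1); split; try lia.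
  by case: (interval_labelP m (L - m.*2.+1)) => -[]; lia.
by case: (interval_labelP m (L.*2 - m.*2.+1)) => -[]; lia.
Qed.

Lemma interval_delta_set m : delta_set (iota m.+1 (2 * m).+1).
Proof.
exists ('I_(4 * m).+2 : finType), (path_graph (4 * m).+2),
  (fun t : 'I_(4 * m).+2 => interval_label m t).
split; first exact: path_graph_simple.
have vertex_le (t : 'I_(4 * m).+2) : t <= (4 * m).+1 by rewrite -ltnS.
have label_twice L : L \in iota m.+1 (2 * m).+1 -> exists t u : 'I_(4 * m).+2,
    [/\ t != u, interval_label m t = L & interval_label m u = L].
  rewrite mem_iota => /andP[lb ub].
  have [t [u [neq_tu tle ule tL uL]]] := @interval_label_twice m L ltac:(lia).
  exists (inord t), (inord u); rewrite !inordK //; split=> //.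
  by apply: contra neq_tu => /eqP/(congr1 val) /=; rewrite !inordK // => ->.
split; first split.
- by move=> t; rewrite mem_iota; have := interval_label_range (vertex_le t); lia.
- by move=> L /label_twice [t [_ [_ tL _]]]; exists t.
- move=> t u neq_tu eq_label.
  by rewrite -(interval_label_dist (vertex_le t) (vertex_le u)) //; exact: path_graph_gdist.
- by move=> L /label_twice [t [u [neq_tu tL uL]]] _; exists t, u.
Qed.

Section Embedding.

Variables (T1 T : finType) (e1 : rel T1) (e : rel T) (h : T1 -> T).
Hypotheses (h_inj : injective h) (h_edge : forall a b, e (h a) (h b) = e1 a b)
  (h_closed : forall a y, e (h a) y -> exists b, y = h b).

Lemma path_embed u q : path e (h u) (map h q) = path e1 u q.
Proof. by rewrite path_map; apply: eq_path. Qed.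

Lemma path_from_embed u p : path e (h u) p -> exists2 q, p = map h q & path e1 u q.
Proof.
elim: p u => [|y p IHp] u /=; first by exists [::].
case/andP => e_uy; have [b eq_yb] := h_closed e_uy.
move: e_uy; rewrite eq_yb => e_ub /IHp [q -> pth].
by exists (b :: q); rewrite //= -h_edge e_ub.
Qed.

Lemma gdist_eq_embed u v k : gdist_eq e1 u v k -> gdist_eq e (h u) (h v) k.
Proof.
move=> [[p [sz pth lst]] shortest]; split.
  by exists (map h p); rewrite size_map path_embed last_map lst.
move=> l lt_lk [p' [sz' /path_from_embed [q eq_p' pth']]].
rewrite eq_p' last_map => /h_inj lst'.
by apply: (shortest l lt_lk); exists q; split; rewrite // -sz' eq_p' size_map.
Qed.

End Embedding.

Definition sum_rel (T1 T2 : Type) (e1 : rel T1) (e2 : rel T2) : rel (T1 + T2) :=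
  fun x y => match x, y with
             | inl a, inl b => e1 a b
             | inr a, inr b => e2 a b
             | _, _ => false
             end.

Definition sum_label (T1 T2 : Type) (f1 : T1 -> nat) (f2 : T2 -> nat) (x : T1 + T2) : nat :=
  match x with inl a => f1 a | inr b => f2 b end.

Section SumGraph.

Variables (T1 T2 : finType) (e1 : rel T1) (e2 : rel T2).

Lemma sum_rel_simple : simple_graph e1 -> simple_graph e2 -> simple_graph (sum_rel e1 e2).
Proof.
move=> [sym1 irr1] [sym2 irr2]; split; last by case=> a /=.
by case=> a [] b /=.
Qed.

Lemma gdist_eq_inl u v k : gdist_eq e1 u v k -> gdist_eq (sum_rel e1 e2) (inl u) (inl v) k.
Proof.
by apply: gdist_eq_embed => [a b [] // | // | a [] b // _]; exists b.
Qed.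

Lemma gdist_eq_inr u v k : gdist_eq e2 u v k -> gdist_eq (sum_rel e1 e2) (inr u) (inr v) k.
Proof.
by apply: gdist_eq_embed => [a b [] // | // | a [] b // _]; exists b.
Qed.

Lemma proper_labeling_sum S1 S2 (f1 : T1 -> nat) (f2 : T2 -> nat) :
  proper_distance_labeling e1 S1 f1 -> proper_distance_labeling e2 S2 f2 ->
  (forall L, L \in S1 -> L \notin S2) ->
  proper_distance_labeling (sum_rel e1 e2) (S1 ++ S2) (sum_label f1 f2).
Proof.
move=> [[lab1 onto1 dist1] twice1] [[lab2 onto2 dist2] twice2] disj.
split; first split.
- by case=> a; rewrite mem_cat ?lab1 ?lab2 ?orbT.
- move=> L; rewrite mem_cat => /orP[/onto1 [a <-] | /onto2 [b <-]].
    by exists (inl a).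
  by exists (inr b).
- case=> a [] b /= neq_ab eq_f.
  + by apply: gdist_eq_inl; apply: dist1 => //; apply: contra neq_ab => /eqP ->.
  + by have := disj _ (lab1 a); rewrite eq_f lab2.
  + by have := disj _ (lab1 b); rewrite -eq_f lab2.
  + by apply: gdist_eq_inr; apply: dist2 => //; apply: contra neq_ab => /eqP ->.
- move=> L; rewrite mem_cat => /orP[/twice1 tw | /twice2 tw] /tw [u [v [neq_uv fu fv]]].
    by exists (inl u), (inl v); split=> //; apply: contra neq_uv => /eqP [->].
  by exists (inr u), (inr v); split=> //; apply: contra neq_uv => /eqP [->].
Qed.

End SumGraph.

Lemma delta_set_cat S1 S2 : delta_set S1 -> delta_set S2 ->
  (forall L, L \in S1 -> L \notin S2) -> delta_set (S1 ++ S2).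
Proof.
move=> [T1 [e1 [f1 [simple1 proper1]]]] [T2 [e2 [f2 [simple2 proper2]]]] disj.
exists (T1 + T2)%type, (sum_rel e1 e2), (sum_label f1 f2).
by split; [exact: sum_rel_simple | exact: proper_labeling_sum].
Qed.

Definition realizes_gaps (S js ks : seq nat) : Prop :=
  [/\ size js = size ks, sorted ltn js, all (fun j => j.+2 < size S) js &
      forall i, i < size ks -> nth 0 S (nth 0 js i).+1 - nth 0 S (nth 0 js i) = nth 0 ks i].

Lemma realizes_gaps_cat S1 S2 js ks : 0 < size S1 -> 1 < size S2 ->
  realizes_gaps S2 js ks ->
  realizes_gaps (S1 ++ S2) ((size S1).-1 :: map (addn (size S1)) js)
                (head 0 S2 - last 0 S1 :: ks).
Proof.
move=> S1_pos S2_gt1 [sz_js sorted_js bound_js gaps].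
split.
- by rewrite /= size_map sz_js.
- rewrite (sorted_pairwise ltn_trans) /= pairwise_map; apply/andP; split.
    by apply/allP => _ /mapP [j _ ->]; lia.
  by move: sorted_js; rewrite (sorted_pairwise ltn_trans); apply: sub_pairwise => x y /=; lia.
- rewrite /= size_cat; apply/andP; split; first lia.
  by apply/allP => _ /mapP [j /(allP bound_js) j_bound ->]; lia.
- case=> [|i] /= lt_i.
    by rewrite prednK // !nth_cat ltnn subnn nth0 ltn_predL S1_pos nth_last.
  rewrite (nth_map 0) ?sz_js // -addnS !nth_cat !ltnNge !leq_addr /= !addKn.
  exact: gaps.
Qed.

Lemma interval_chain ks m : all (fun k => 0 < k) ks ->
  exists S js, [/\ delta_set S, sorted ltn S, head 0 S = m.+1,
                   all (fun x => m < x) S & 2 * m < size S] /\ realizes_gaps S js ks.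
Proof.
elim: ks m => [|k ks IHks] m /=; set I := iota m.+1 (2 * m).+1;
  have I_range x : x \in I -> m < x <= (3 * m).+1 by rewrite mem_iota; lia.
  move=> _; exists I, [::]; split; last by split.
  split=> //.
  - exact: interval_delta_set.
  - exact: iota_ltn_sorted.
  - by apply/allP => x /I_range; lia.
  - by rewrite size_iota.
case/andP => k_pos /(IHks (3 * m + k)) [S [js [[delta_S sorted_S head_S above_S size_S] gaps_S]]].
exists (I ++ S), ((size I).-1 :: map (addn (size I)) js); split; first split.
- apply: delta_set_cat; first exact: interval_delta_set.
  + exact: delta_S.
  + by move=> x /I_range x_range; apply/negP => /(allP above_S); lia.
- rewrite (sorted_pairwise ltn_trans) pairwise_cat -!(sorted_pairwise ltn_trans).
  rewrite iota_ltn_sorted sorted_S !andbT.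
  by apply/allrelP => x y /I_range x_range /(allP above_S); lia.
- by [].
- rewrite all_cat; apply/andP; split; first by apply/allP => x /I_range; lia.
  by apply: sub_all above_S => x /=; lia.
- by rewrite size_cat size_iota; lia.
- have last_I : last 0 I = (3 * m).+1 by rewrite -nth_last size_iota nth_iota //; lia.
  have -> : k = head 0 S - last 0 I by rewrite head_S last_I; lia.
  by apply: realizes_gaps_cat; rewrite ?size_iota //; lia.
Qed.

Theorem mainTheorem9 (ks : seq nat) (s1 : nat) :
  sorted ltn ks -> all (fun k => 0 < k) ks -> 0 < s1 ->
  exists (S js : seq nat),
    delta_set S /\ sorted ltn S /\ head 0 S = s1 /\
    size js = size ks /\ sorted ltn js /\
    all (fun j => j.+2 < size S) js /\
    (forall i, i < size ks ->
       nth 0 S (nth 0 js i).+1 - nth 0 S (nth 0 js i) = nth 0 ks i).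
Proof.
(* Any sequence of positive gaps is realized, increasing or not. *)
move=> _ ks_pos; case: s1 => // m _.
have [S [js [[delta_S sorted_S head_S _ _] [sz_js sorted_js bound_js gaps]]]] :=
  interval_chain m ks_pos.
by exists S, js.
Qed.
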